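(* Let $E,F$ be Banach spaces, $a\in E$, $1\le p<\infty$, and $f:E\to F$. Suppose there exist $C,\delta,r>0$ such that \[ \Vert(f(a+x_{j})-f(a))_{j=1}^{k}\Vert_{w,1}\leq C\Vert(x_{j})_{j=1}^{k}\Vert_{w,p}^{r} \] for every $k\in\mathbb{N}$ and all $x_{1},\dots,x_{k}\in E$ with $\Vert(x_{j})_{j=1}^{k}\Vert_{w,p}<\delta$. Then $f$ is almost $p$-summing at $a$.
   Context: For a finite sequence $(y_j)_{j=1}^k$ in a Banach space $X$ and $1\le s<\infty$, $\Vert(y_{j})_{j=1}^k\Vert_{w,s}:=\sup_{\varphi\in B_{X'}}(\sum_{j=1}^k|\varphi(y_{j})|^{s})^{1/s}$. With $(r_j)$ the Rademacher functions, $f$ is almost $p$-summing at $a$ if there exist $C_a,\epsilon_a,r_a>0$ with $(\int_{0}^{1}\Vert\sum_{j=1}^{k}(f(a+x_{j})-f(a))r_{j}(t)\Vert^{2}dt)^{1/2}\leq C_{a}\Vert(x_{j})_{j=1}^{k}\Vert_{w,p}^{r_{a}}$ for all $k$ and $x_1,\dots,x_k\in E$ with $\Vert(x_{j})_{j=1}^{k}\Vert_{w,p}<\epsilon_{a}$. *)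

From HB Require Import structures.
From mathcomp Require Import all_boot all_order all_algebra.
From mathcomp Require Import all_classical all_reals all_analysis.
Set Implicit Arguments. Unset Strict Implicit. Unset Printing Implicit Defensive.
Import Order.TTheory GRing.Theory Num.Theory.
Import numFieldNormedType.Exports.
Local Open Scope classical_set_scope.
Local Open Scope ring_scope.

(* phi is an element of the closed unit ball of the (topological) dual X':
   a linear functional with |phi x| <= ||x|| (hence continuous, norm <= 1). *)
Definition dual_ball {R : realType} {X : normedModType R} (phi : X -> R) : Prop :=
  (forall x y : X, phi (x + y) = phi x + phi y) /\
  (forall (c : R) (x : X), phi (c *: x) = c * phi x) /\
  (forall x : X, `|phi x| <= `|x|).

Definition wnorm {R : realType} {X : normedModType R} (s : R) (k : nat)
  (y : 'I_k -> X) : R :=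
  sup [set (\sum_(j < k) `|phi (y j)| `^ s) `^ s^-1 | phi in [set phi | dual_ball phi]].

Definition rademacher {R : realType} (n : nat) (t : R) : R :=
  Num.sg (sin (2 ^+ n * pi * t)).

(* f almost p-summing at a; the ordinal j : 'I_k corresponds to index j+1 *)
Definition almost_p_summing {R : realType} {E F : normedModType R}
  (f : E -> F) (a : E) (p : R) : Prop :=
  exists C eps r : R, 0 < C /\ 0 < eps /\ 0 < r /\
    forall (k : nat) (x : 'I_k -> E), wnorm p x < eps ->
      Num.sqrt (Rintegral (@lebesgue_measure R) `[0, 1]
        (fun t => `| \sum_(j < k) rademacher j.+1 t *: (f (a + x j) - f a) | ^+ 2))
      <= C * wnorm p x `^ r.

(** The Rademacher average is dominated pointwise by the weak 1-norm: for each
    [t], take a norming functional [phi] of [u = \sum_j r_j(t) y_j]; since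
    [|r_j(t)| <= 1], [`|u| = phi u <= \sum_j `|phi (y_j)| <= wnorm 1 y].  The
    square root of the integral over [[0, 1]] is therefore at most [wnorm 1 y],
    and the hypothesis applies with the same constants.  Norming functionals
    come from the real Hahn-Banach theorem, obtained by Zorn's lemma on graphs
    of norm-dominated linear functionals defined on subspaces together with the
    classical one-dimensional extension step. *)

From HB Require Import structures.
From mathcomp Require Import all_boot all_order all_algebra.
From mathcomp Require Import all_classical all_reals all_analysis.
From mathcomp Require Import measurable_realfun lra.
Import Order.TTheory GRing.Theory Num.Theory.
Import numFieldNormedType.Exports.
Import HBNNSimple.
Set Implicit Arguments.
Unset Strict Implicit.
Unset Printing Implicit Defensive.
Local Open Scope classical_set_scope.
Local Open Scope ring_scope.

Section integral_bound.
Context d {T : measurableType d} {R : realType}.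
Variable mu : {measure set T -> \bar R}.

(* [f] need not be measurable: the integral of a nonnegative function is a
   supremum over the simple functions below it. *)
Lemma ge0_integral_le_bound (D : set T) (f : T -> R) (M : R) : measurable D ->
  (forall x, D x -> 0 <= f x <= M) ->
  (\int[mu]_(x in D) (f x)%:E <= M%:E * mu D)%E.
Proof.
move=> mD fM.
rewrite ge0_integralE; last by move=> x /fM /andP[f0 _]; rewrite lee_fin.
apply: ge_ereal_sup => _ [h /= hf <-].
rewrite -[X in sintegral _ X](@patch_setT _ _ (fun=> 0%R)) -integral_nnsfun//.
apply: (@le_trans _ _ (\int[mu]_x ((cst M%:E) \_ D) x)%E).
  apply: ge0_le_integral => //.
  - by move=> x _; rewrite lee_fin.
  - by apply/measurable_EFinP; exact: measurable_funTS.
  - by apply/(measurable_restrictT _ mD); exact: measurable_cst.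
  - move=> x _; apply: (le_trans (hf x)); rewrite /patch.
    case: ifPn => // /set_mem Dx.
    by rewrite lee_fin; have /andP[] := fM x Dx.
by rewrite -integral_mkcond integral_cst.
Qed.

Lemma Rintegral_le_bound (D : set T) (f : T -> R) (M : R) : measurable D ->
  mu D \is a fin_num -> (forall x, D x -> 0 <= f x <= M) ->
  Rintegral mu D f <= M * fine (mu D).
Proof.
move=> mD muD fM; have intf := ge0_integral_le_bound mD fM.
have intf_ge0 : (0 <= \int[mu]_(x in D) (f x)%:E)%E.
  by apply: integral_ge0 => x /fM /andP[f0 _]; rewrite lee_fin.
have intf_fin : (\int[mu]_(x in D) (f x)%:E)%E \is a fin_num.
  by rewrite ge0_fin_numE// (le_lt_trans intf)// -(fineK muD) -EFinM ltry.
by rewrite -lee_fin EFinM !fineK.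
Qed.
End integral_bound.

Section dominated_graph.
Context {R : realType} {V : normedModType R}.

(* Partial functionals are handled through their graphs, so that chains can be
   merged by union in Zorn's lemma. *)
Definition dominated_linear_graph (G : set (V * R)) : Prop :=
  [/\ forall x a b, G (x, a) -> G (x, b) -> a = b,
      forall x a y b, G (x, a) -> G (y, b) -> G (x + y, a + b),
      forall c x a, G (x, a) -> G (c *: x, c * a) &
      forall x a, G (x, a) -> a <= `|x|].

Definition norm_line_graph (v : V) : set (V * R) :=
  [set (c *: v, c * `|v|) | c in [set: R]].

Lemma norm_line_graph_dominated v : dominated_linear_graph (norm_line_graph v).
Proof.
split.
- move=> _ _ _ [c _ [<- <-]] [c' _ [ecc' <-]].
  have /eqP : (c' - c) *: v = 0 by rewrite scalerBl ecc' subrr.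
  rewrite scaler_eq0 => /orP[|/eqP->]; last by rewrite normr0 !mulr0.
  by rewrite subr_eq0 => /eqP->.
- move=> _ _ _ _ [c _ [<- <-]] [c' _ [<- <-]].
  by exists (c + c') => //; rewrite scalerDl mulrDl.
- move=> c _ _ [c' _ [<- <-]].
  by exists (c * c') => //; rewrite scalerA mulrA.
- by move=> _ _ [c _ [<- <-]]; rewrite normrZ ler_wpM2r// ler_norm.
Qed.

Lemma dominated_linear_graph_pairwise (U : set (V * R)) :
  (forall p q, U p -> U q ->
    exists Z, [/\ dominated_linear_graph Z, Z `<=` U, Z p & Z q]) ->
  dominated_linear_graph U.
Proof.
move=> hU; split.
- move=> x a b Ua Ub; have [Z [[Zfun _ _ _] _ Za Zb]] := hU _ _ Ua Ub.
  exact: Zfun Za Zb.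
- move=> x a y b Ua Ub; have [Z [[_ Zadd _ _] ZU Za Zb]] := hU _ _ Ua Ub.
  exact/ZU/Zadd.
- move=> c x a Ua; have [Z [[_ _ Zscale _] ZU Za _]] := hU _ _ Ua Ua.
  exact/ZU/Zscale.
- move=> x a Ua; have [Z [[_ _ _ Zle] _ Za _]] := hU _ _ Ua Ua.
  exact: Zle.
Qed.

Lemma normrDZ (s : R) (y w : V) : 0 < s -> `|y + s *: w| = s * `|s^-1 *: y + w|.
Proof.
move=> s_gt0; rewrite -[X in X * _](gtr0_norm s_gt0) -normrZ scalerDr scalerA.
by rewrite mulfV ?gt_eqF// scale1r.
Qed.

Section one_step_extension.
Variables (H : set (V * R)) (x0 : V).
Hypothesis domH : dominated_linear_graph H.

Lemma dominated_graph_gap : H (0, 0) -> exists c : R,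
  (forall y a, H (y, a) -> a - `|y - x0| <= c) /\
  (forall y a, H (y, a) -> c <= `|y + x0| - a).
Proof.
move=> H00; have [_ Hadd _ Hle] := domH.
have gap y a z b : H (y, a) -> H (z, b) -> a - `|y - x0| <= `|z + x0| - b.
  move=> Hya Hzb; have := Hle _ _ (Hadd _ _ _ _ Hya Hzb).
  have -> : y + z = (y - x0) + (z + x0) by rewrite addrACA addNr addr0.
  by move=> /le_trans /(_ (ler_normD _ _)); lra.
pose L := [set p.2 - `|p.1 - x0| | p in H].
have L0 : L (0 - `|0 - x0|) by exists (0, 0).
have supL : has_sup L.
  split; first by exists (0 - `|0 - x0|).
  by exists (`|0 + x0| - 0) => _ [[y a] Hya <-]; exact: gap.
exists (sup L); split.
- by move=> y a Hya; apply: sup_upper_bound => //; exists (y, a).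
- move=> z b Hzb; apply: ge_sup; first by exists (0 - `|0 - x0|).
  by move=> _ [[y a] Hya <-]; exact: gap.
Qed.

Definition graph_extension (c : R) : set (V * R) :=
  [set (p.1 + t *: x0, p.2 + t * c) | p in H & t in [set: R]].

Hypothesis x0_notin : ~ exists a, H (x0, a).

Lemma graph_extension_coefI y a t y' a' t' : H (y, a) -> H (y', a') ->
  y + t *: x0 = y' + t' *: x0 -> t = t'.
Proof.
have [_ Hadd Hscale _] := domH.
move=> Hya Hya' e; apply: contrapT => /eqP; rewrite -subr_eq0 => tt'.
apply: x0_notin; exists ((t - t')^-1 * (a' + - 1 * a)).
have -> : x0 = (t - t')^-1 *: (y' + (- 1) *: y).
  apply: (scalerI tt'); rewrite scalerA mulfV// scale1r scaleN1r scalerBl.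
  by apply: (addrI y); rewrite addrA e addrK addrCA subrr addr0.
by apply: (Hscale); apply: Hadd => //; exact: Hscale.
Qed.

Lemma graph_extension_dominated c :
  (forall y a, H (y, a) -> a - `|y - x0| <= c) ->
  (forall y a, H (y, a) -> c <= `|y + x0| - a) ->
  dominated_linear_graph (graph_extension c).
Proof.
have [Hfun Hadd Hscale Hle] := domH.
move=> c_ge c_le; split.
- move=> _ _ _ [[y a] Hya [t _ [<- <-]]] [[y' a'] Hya' [t' _ [e <-]]] /=.
  have tt' := graph_extension_coefI Hya' Hya e; subst t'.
  have yy' : y' = y by apply: (addIr (t *: x0)).
  by subst y'; rewrite (Hfun _ _ _ Hya Hya').
- move=> _ _ _ _ [[y a] Hya [t _ [<- <-]]] [[y' a'] Hya' [t' _ [<- <-]]] /=.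
  exists (y + y', a + a'); first exact: Hadd.
  exists (t + t') => //.
  by rewrite scalerDl mulrDl; congr (_, _); exact: addrACA.
- move=> s _ _ [[y a] Hya [t _ [<- <-]]] /=.
  exists (s *: y, s * a); first exact: Hscale.
  by exists (s * t) => //; rewrite scalerDr scalerA mulrDr mulrA.
- move=> _ _ [[y a] Hya [t _ [<- <-]]] /=.
  have [t_lt0|t_gt0|->] := ltgtP t 0.
  + have u_gt0 : 0 < - t by rewrite oppr_gt0.
    have := c_ge _ _ (Hscale (- t)^-1 _ _ Hya).
    rewrite -(ler_pM2l u_gt0) mulrBr mulrA mulfV ?gt_eqF// mul1r.
    have -> : y + t *: x0 = y + (- t) *: (- x0).
      by rewrite scalerN scaleNr opprK.
    rewrite normrDZ//; lra.
  + have := c_le _ _ (Hscale t^-1 _ _ Hya).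
    rewrite -(ler_pM2l t_gt0) mulrBr mulrA mulfV ?gt_eqF// mul1r -normrDZ//.
    lra.
  + by rewrite scale0r mul0r !addr0; exact: Hle.
Qed.

End one_step_extension.

Lemma maximal_dominated_graph_total (H : set (V * R)) :
  dominated_linear_graph H -> H (0, 0) ->
  (forall G, dominated_linear_graph G -> H `<=` G -> G `<=` H) ->
  forall x, exists a, H (x, a).
Proof.
move=> domH H00 Hmax x0; apply: contrapT => x0_notin.
have [c [c_ge c_le]] := dominated_graph_gap x0 domH H00.
have domG := graph_extension_dominated domH x0_notin c_ge c_le.
apply: x0_notin; exists c; apply: (Hmax _ domG).
- move=> [y a] Hya; exists (y, a) => //; exists 0 => //.
  by rewrite scale0r mul0r !addr0.
- exists (0, 0) => //; exists 1 => //.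
  by rewrite scale1r mul1r !add0r.
Qed.

Lemma exists_maximal_dominated_graph (v : V) : exists H : set (V * R),
  [/\ dominated_linear_graph H, norm_line_graph v `<=` H &
      forall G, dominated_linear_graph G -> H `<=` G -> G `<=` H].
Proof.
(* Not [norm_line_graph v `<=` G], which fails for the union of the empty chain. *)
pose P G := dominated_linear_graph (G `|` norm_line_graph v).
have [A [PA Amax]] : exists A, P A /\ forall B, A `<` B -> ~ P B.
  apply: Zorn_bigcup => Fam FamP Famtot.
  apply: dominated_linear_graph_pairwise => p q.
  have sub X : Fam X ->
      X `|` norm_line_graph v `<=` \bigcup_(X in Fam) X `|` norm_line_graph v.
    by move=> FX z [Xz|Lz]; [left; exists X|right].
  move=> [[X FX Xp]|Lp] [[Y FY Yq]|Lq].
  - have [XY|YX] := Famtot _ _ FX FY.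
    + exists (Y `|` norm_line_graph v).
      by split; [exact: FamP|exact: sub|left; exact: XY|left].
    + exists (X `|` norm_line_graph v).
      by split; [exact: FamP|exact: sub|left|left; exact: YX].
  - exists (X `|` norm_line_graph v).
    by split; [exact: FamP|exact: sub|left|right].
  - exists (Y `|` norm_line_graph v).
    by split; [exact: FamP|exact: sub|right|left].
  - exists (norm_line_graph v).
    by split => //; exact: norm_line_graph_dominated.
exists (A `|` norm_line_graph v); split; [exact: PA|by move=> z Lz; right|].
move=> G domG AG z Gz; apply: contrapT => AGz.
have GL : G `|` norm_line_graph v = G.
  by apply/seteqP; split=> [w [//|Lw]|w Gw]; [apply: AG; right|left].
apply: (Amax G); last by rewrite /P GL.
split; first by move=> w Aw; apply: AG; left.
by move=> GA; apply: AGz; left; exact: GA.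
Qed.

Theorem exists_norming_functional (v : V) :
  exists phi : V -> R, dual_ball phi /\ phi v = `|v|.
Proof.
have [H [[Hfun Hadd Hscale Hle] LH Hmax]] := exists_maximal_dominated_graph v.
have H00 : H (0, 0) by apply: LH; exists 0 => //; rewrite scale0r mul0r.
have [phi Hphi] := choice (maximal_dominated_graph_total
  (And4 Hfun Hadd Hscale Hle) H00 Hmax).
exists phi; split; last first.
  by apply: (Hfun v) => //; apply: LH; exists 1 => //; rewrite scale1r mul1r.
split; [|split].
- by move=> x y; apply: (Hfun (x + y)) => //; exact: Hadd.
- by move=> c x; apply: (Hfun (c *: x)) => //; exact: Hscale.
- move=> x; rewrite ler_norml Hle// andbT lerNl.
  by have := Hle _ _ (Hscale (-1) _ _ (Hphi x)); rewrite scaleN1r normrN mulN1r.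
Qed.

End dominated_graph.

Section weak_norm.
Context {R : realType} {X : normedModType R}.

Lemma dual_ball_sum (phi : X -> R) (I : Type) (r : seq I) (P : pred I)
    (F : I -> X) : dual_ball phi ->
  phi (\sum_(i <- r | P i) F i) = \sum_(i <- r | P i) phi (F i).
Proof.
move=> [phiD [phiZ _]].
have phi0 : phi 0 = 0 by rewrite -(scale0r (0 : X)) phiZ mul0r.
exact: (big_morph phi phiD phi0).
Qed.

Lemma sum_dual_le_wnorm1 k (y : 'I_k -> X) (phi : X -> R) : dual_ball phi ->
  \sum_(j < k) `|phi (y j)| <= wnorm 1 y.
Proof.
have wnorm1_term (psi : X -> R) :
    (\sum_(j < k) `|psi (y j)| `^ 1) `^ 1^-1 = \sum_(j < k) `|psi (y j)|.
  rewrite invr1 powRr1; last by apply: sumr_ge0 => j _; exact: powR_ge0.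
  by apply: eq_bigr => j _; rewrite powRr1.
move=> phi_ball; apply: sup_upper_bound; last first.
  by exists phi; rewrite ?wnorm1_term.
split; first by exists (\sum_(j < k) `|phi (y j)|), phi; rewrite ?wnorm1_term.
exists (\sum_(j < k) `|y j|) => _ [psi [_ [_ psi_le]] <-].
by rewrite wnorm1_term; apply: ler_sum => j _.
Qed.

Lemma norm_sum_scale_le_wnorm1 k (e : 'I_k -> R) (y : 'I_k -> X) :
  (forall j, `|e j| <= 1) -> `|\sum_(j < k) e j *: y j| <= wnorm 1 y.
Proof.
move=> e_le1.
have [phi [phi_ball <-]] := exists_norming_functional (\sum_(j < k) e j *: y j).
rewrite dual_ball_sum//; apply: le_trans (sum_dual_le_wnorm1 y phi_ball).
apply: le_trans (ler_norm _) _; apply: le_trans (ler_norm_sum _ _ _) _.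
apply: ler_sum => j _; have [_ [phiZ _]] := phi_ball.
by rewrite phiZ normrM ler_piMl.
Qed.

End weak_norm.

Lemma rademacher_norm_le1 (R : realType) n (t : R) : `|rademacher n t| <= 1.
Proof. by rewrite normr_sg; case: (_ != 0). Qed.

Theorem mainTheorem8 (R : realType) (E F : completeNormedModType R)
  (a : E) (p : R) (f : E -> F) :
  1 <= p ->
  (exists C delta r : R, 0 < C /\ 0 < delta /\ 0 < r /\
     forall (k : nat) (x : 'I_k -> E), wnorm p x < delta ->
       wnorm 1 (fun j => f (a + x j) - f a) <= C * wnorm p x `^ r) ->
  almost_p_summing f a p.
Proof.
move=> _ [C [delta [r [C_gt0 [delta_gt0 [r_gt0 hyp]]]]]].
exists C, delta, r; do 3 split => //; move=> k x wx.
apply: le_trans (hyp k x wx).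
set y := fun j => f (a + x j) - f a.
have rad_le t : `|\sum_(j < k) rademacher j.+1 t *: y j| <= wnorm 1 y.
  by apply: norm_sum_scale_le_wnorm1 => j; exact: rademacher_norm_le1.
have wy_ge0 : 0 <= wnorm 1 y := le_trans (normr_ge0 _) (rad_le 0).
rewrite -(ger0_norm wy_ge0) -sqrtr_sqr ler_sqrt ?exprn_ge0//.
have unit_itv : @lebesgue_measure R `[0, 1] = 1%E.
  by rewrite lebesgue_measure_itv/= lte_fin ltr01 oppr0 adde0.
apply: le_trans (Rintegral_le_bound (M := wnorm 1 y ^+ 2) _ _ _) _ => //.
- by have : @lebesgue_measure R `[0, 1] \is a fin_num by rewrite unit_itv.
- by move=> t _; rewrite sqr_ge0 /= ler_sqr ?nnegrE.
- by rewrite (_ : fine _ = 1) ?mulr1//; exact: (congr1 fine unit_itv).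
Qed.
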